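(* Let $A,B$ be abelian groups, $i,j\geq 1$, and let $\phi:\mathcal{D}_i(A)\rightarrow\mathcal{D}_j(B)$ be a morphism. If $i>j$ then $\phi$ is constant. If $1\leq i\leq j$ then $\phi$ is also a morphism from $\mathcal{D}_1(A)$ to $\mathcal{D}_{j-i+1}(B)$.
   Context: A cube morphism $\{0,1\}^n\rightarrow\{0,1\}^m$ is a map that extends to an affine homomorphism $\mathbb{Z}^n\rightarrow\mathbb{Z}^m$. For an abelian group $A$ and $k\in\mathbb{N}$, $\mathcal{D}_k(A)$ is the set $A$ with cube sets $C^n(\mathcal{D}_k(A))$ consisting of those $f:\{0,1\}^n\rightarrow A$ such that for every cube morphism $\psi:\{0,1\}^{k+1}\rightarrow\{0,1\}^n$ we have $\sum_{v\in\{0,1\}^{k+1}}(-1)^{v_1+\dots+v_{k+1}}f(\psi(v))=0$. A morphism between such structures is a map $g$ with $g\circ c\in C^n$ of the target for every $n$ and every $c\in C^n$ of the source. *)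

From HB Require Import structures.
From mathcomp Require Import all_boot all_order all_algebra.
Set Implicit Arguments. Unset Strict Implicit. Unset Printing Implicit Defensive.
Import Order.TTheory GRing.Theory Num.Theory.
Local Open Scope ring_scope.

Definition cube (n : nat) := {ffun 'I_n -> bool}.

(* psi : {0,1}^n -> {0,1}^m is a cube morphism if it extends to an affine
   homomorphism Z^n -> Z^m, i.e. psi v = c + M v for some integer vector c
   and integer matrix M. *)
Definition cube_morphism (n m : nat) (psi : cube n -> cube m) : Prop :=
  exists (c : 'I_m -> int) (M : 'I_m -> 'I_n -> int),
    forall (v : cube n) (r : 'I_m),
      ((psi v r : nat) : int) = c r + \sum_(l < n) M r l * ((v l : nat) : int).

Definition alt_sum (A : zmodType) (k n : nat) (f : cube n -> A)
  (psi : cube k.+1 -> cube n) : A :=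
  \sum_(v : cube k.+1) (f (psi v)) *~ ((-1) ^+ (\sum_(l < k.+1) (v l : nat))).

Definition Dk_cube (A : zmodType) (k n : nat) (f : cube n -> A) : Prop :=
  forall psi : cube k.+1 -> cube n, cube_morphism psi -> alt_sum f psi = 0.

Definition Dk_morphism (A B : zmodType) (k l : nat) (g : A -> B) : Prop :=
  forall (n : nat) (f : cube n -> A), Dk_cube k f -> Dk_cube l (g \o f).

From mathcomp Require Import all_boot all_order all_algebra zify.
Set Implicit Arguments. Unset Strict Implicit. Unset Printing Implicit Defensive.
Import Order.TTheory GRing.Theory Num.Theory.
Local Open Scope ring_scope.

(* A D_1-cube is an affine function of the vertex, and so
   is its composite with a cube morphism.  Each coordinate of a cube morphism
   [{0,1}^(k+1) -> {0,1}^n] depends on at most one input coordinate, so a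
   monomial of degree at most k in these coordinates is invariant under flipping
   some input coordinate and has alternating sum 0: sums of such monomials are
   D_k-cubes.  Finally, if [phi : D_i(A) -> D_(m+w)(B)] with [w < i] and [h] is
   affine on [{0,1}^(m+1)], then [g(v, u) = h(0) + (h(v) - h(0)) u_1 ... u_w] is a
   D_i-cube on [{0,1}^(m+1+w)]; [phi \o g] is a D_(m+w)-cube, so its alternating
   sum over the whole cube vanishes, and since [g] is constant off the face
   [u = 1] that sum is [+-] the alternating sum of [phi \o h].  Taking
   [(m, w) = (0, j)] shows that [phi] is constant when [j < i]; taking
   [(m, w) = (j - i + 1, i - 1)] gives the second claim. *)

Definition cube_sign n (x : cube n) : int := (-1) ^+ (\sum_(l < n) (x l : nat)).

Definition signed_sum (A : zmodType) n (F : cube n -> A) : A :=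
  \sum_(x : cube n) F x *~ cube_sign x.

Lemma alt_sumE (A : zmodType) k n (f : cube n -> A) (psi : cube k.+1 -> cube n) :
  alt_sum f psi = signed_sum (f \o psi).
Proof. by []. Qed.

Section SignedSum.
Variables (A : zmodType) (n : nat).
Implicit Types F G : cube n -> A.

Lemma eq_signed_sum F G : F =1 G -> signed_sum F = signed_sum G.
Proof. by move=> FG; apply: eq_bigr => x _; rewrite FG. Qed.

Lemma signed_sumB F G : signed_sum (fun x => F x - G x) = signed_sum F - signed_sum G.
Proof. by rewrite /signed_sum -sumrB; apply: eq_bigr => x _; rewrite mulrzBl. Qed.

Lemma signed_sumD F G : signed_sum (fun x => F x + G x) = signed_sum F + signed_sum G.
Proof. by rewrite /signed_sum -big_split; apply: eq_bigr => x _; rewrite mulrzDl. Qed.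

Lemma signed_sum_sum (I : finType) (F : I -> cube n -> A) :
  signed_sum (fun x => \sum_(l : I) F l x) = \sum_(l : I) signed_sum (F l).
Proof.
by rewrite /signed_sum exchange_big; apply: eq_bigr => x _; rewrite mulrz_suml.
Qed.

End SignedSum.

Definition flip n (p : 'I_n) (x : cube n) : cube n :=
  [ffun l => if l == p then ~~ x l else x l].

Lemma flipK n (p : 'I_n) : involutive (flip p).
Proof. by move=> x; apply/ffunP=> l; rewrite !ffunE; case: eqP => // _; rewrite negbK. Qed.

Lemma cube_sign_flip n (p : 'I_n) (x : cube n) : cube_sign (flip p x) = - cube_sign x.
Proof.
rewrite /cube_sign (bigD1 p) //= [in RHS](bigD1 p) //= !exprD ffunE eqxx.
rewrite (eq_bigr (fun l => (x l : nat))); last by move=> l /negPf Hl; rewrite ffunE Hl.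
by case: (x p); rewrite /= ?expr1 ?expr0 ?mulN1r ?mul1r ?opprK.
Qed.

Lemma signed_sum_flip_invariant (A : zmodType) n (p : 'I_n) (F : cube n -> A) :
  (forall x, F (flip p x) = F x) -> signed_sum F = 0.
Proof.
move=> HF; rewrite /signed_sum (bigID (fun x : cube n => x p)) /=.
rewrite [X in _ + X](reindex (flip p)); last by exists (flip p) => y _; rewrite flipK.
rewrite [X in _ + X](eq_bigl (fun x : cube n => x p)); last first.
  by move=> x; rewrite /= ffunE eqxx negbK.
rewrite -big_split /=; apply: big1 => x _.
by rewrite HF cube_sign_flip mulrNz addrN.
Qed.

Lemma signed_sum_const (A : zmodType) n (a : A) : signed_sum (fun _ : cube n.+1 => a) = 0.
Proof. exact: (@signed_sum_flip_invariant _ _ ord0). Qed.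

Lemma signed_sum_cube1 (A : zmodType) (F : cube 1 -> A) :
  signed_sum F = F [ffun => false] - F [ffun => true].
Proof.
have cube1E (v : cube 1) : v = [ffun => v ord0].
  by apply/ffunP => r; rewrite ffunE (ord1 r).
rewrite /signed_sum (reindex (fun b => [ffun => b] : cube 1)) /=; last first.
  by exists (fun v : cube 1 => v ord0) => [b _|v _]; rewrite ?ffunE -?cube1E.
rewrite big_bool /cube_sign !big_ord1 !ffunE /= expr1 expr0 mulrN1z mulr1z.
by rewrite addrC.
Qed.

Definition cube2 (a b : bool) : cube 2 := [ffun r => if r == ord0 then a else b].

Lemma signed_sum_cube2 (A : zmodType) (F : cube 2 -> A) :
  signed_sum F =
  F (cube2 true true) - F (cube2 true false) - F (cube2 false true) + F (cube2 false false).
Proof.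
have ord2_max (r : 'I_2) : r != ord0 -> r = ord_max.
  by case: r => [[|[|r]] Hr] //= _; apply: val_inj.
rewrite /signed_sum (reindex (fun p : bool * bool => cube2 p.1 p.2)); last first.
  exists (fun v : cube 2 => (v ord0, v ord_max)) => [[a b] _|v _] /=.
    by rewrite !ffunE.
  apply/ffunP => r; rewrite ffunE; case: eqP => [->//|/eqP /ord2_max -> //].
rewrite -(pair_bigA _ (fun a b => F (cube2 a b) *~ cube_sign (cube2 a b))) /= !big_bool /=.
rewrite /cube_sign !big_ord_recl !big_ord0 !ffunE /= !addn0.
rewrite expr0 expr1 -[(-1) ^+ (1 + 1)]/(-1 * -1) mulN1r opprK !mulr1z !mulrN1z.
by rewrite addrA.
Qed.

Definition cube_of n (S : {set 'I_n}) : cube n := [ffun l => l \in S].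

Lemma sum_mul_cube_of n (M : 'I_n -> int) (S : {set 'I_n}) :
  \sum_(l < n) M l * ((cube_of S l : nat) : int) = \sum_(l in S) M l.
Proof.
rewrite [RHS]big_mkcond; apply: eq_bigr => l _.
by rewrite ffunE; case: (l \in S); rewrite ?mulr1 ?mulr0.
Qed.

(* Evaluate at [0], [e_p], [e_q] and [e_p + e_q]: all four values lie in [{0, 1}]. *)
Lemma bool_affine_support n (g : cube n -> bool) (c : int) (M : 'I_n -> int) :
  (forall v, ((g v : nat) : int) = c + \sum_(l < n) M l * ((v l : nat) : int)) ->
  forall p q, p != q -> M p = 0 \/ M q = 0.
Proof.
move=> Hg p q npq.
have g0 := Hg (cube_of set0); rewrite sum_mul_cube_of big_set0 in g0.
have gp := Hg (cube_of [set p]); rewrite sum_mul_cube_of big_set1 in gp.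
have gq := Hg (cube_of [set q]); rewrite sum_mul_cube_of big_set1 in gq.
have gpq := Hg (cube_of [set p; q]).
rewrite sum_mul_cube_of big_setU1 ?big_set1 ?in_set1 // in gpq.
move: g0 gp gq gpq.
by case: (g (cube_of set0)); case: (g (cube_of [set p])); case: (g (cube_of [set q]));
  case: (g (cube_of [set p; q])) => /=; lia.
Qed.

Lemma cube_morphism_dependency k n (chi : cube k.+1 -> cube n) : cube_morphism chi ->
  exists dep : 'I_n -> 'I_k.+1,
    forall x r p, p != dep r -> chi (flip p x) r = chi x r.
Proof.
move=> [c [M HM]].
exists (fun r => odflt ord0 [pick l | M r l != 0]) => x r p.
have M_dep : p != odflt ord0 [pick l | M r l != 0] -> M r p = 0.
  case: pickP => [d /= Md pd|/(_ p) /negbFE /eqP //].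
  by case: (bool_affine_support (HM^~ r) pd) => // Md0; rewrite Md0 eqxx in Md.
move=> /M_dep Mp.
have : ((chi (flip p x) r : nat) : int) = ((chi x r : nat) : int).
  rewrite !HM; congr (_ + _); apply: eq_bigr => l _.
  by rewrite ffunE; case: eqP => [->|//]; rewrite Mp !mul0r.
by case: (chi (flip p x) r); case: (chi x r).
Qed.

Lemma cube_morphism_id n : cube_morphism (fun x : cube n => x).
Proof.
exists (fun _ => 0), (fun r l => (((r == l) : nat) : int)) => x r.
rewrite add0r (bigD1 r) //= eqxx mul1r big1 ?addr0 // => l /negPf rl.
by rewrite eq_sym rl mul0r.
Qed.

(* A monomial of degree at most [k] in the coordinates of [chi x] is invariant under
   flipping some input coordinate on which none of its variables depends. *)
Lemma signed_sum_morphism_monomial (A : zmodType) k n (chi : cube k.+1 -> cube n)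
    (S : {set 'I_n}) (a : A) :
  cube_morphism chi -> (#|S| <= k)%N ->
  signed_sum (fun x => a *+ [forall r in S, chi x r]) = 0.
Proof.
move=> /cube_morphism_dependency [dep Hdep] cardS.
have : (0 < #|~: (dep @: S)|)%N.
  have := cardsC (dep @: S); rewrite card_ord => /(congr1 (subn^~ #|dep @: S|)).
  rewrite addKn => ->; rewrite subn_gt0.
  by rewrite ltnS (leq_trans (leq_imset_card dep S)).
rewrite card_gt0 => /set0Pn [p]; rewrite inE => p_notin_dep.
apply: (@signed_sum_flip_invariant _ _ p) => x; congr (_ *+ nat_of_bool _).
apply: eq_forallb_in => r rS; rewrite Hdep //.
by apply: contra p_notin_dep => /eqP ->; apply: imset_f.
Qed.

Lemma Dk_cube_monomial_sum (A : zmodType) k n L (b0 : A) (b : 'I_L -> A)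
    (S : 'I_L -> {set 'I_n}) :
  (forall l, #|S l| <= k)%N ->
  Dk_cube k (fun y => b0 + \sum_(l < L) b l *+ [forall r in S l, y r]).
Proof.
move=> cardS chi Hchi; rewrite alt_sumE /comp signed_sumD signed_sum_const add0r.
rewrite signed_sum_sum; apply: big1 => l _.
exact: signed_sum_morphism_monomial.
Qed.

Definition affine_cube (A : zmodType) n (b0 : A) (b : 'I_n -> A) (v : cube n) : A :=
  b0 + \sum_(l < n) b l *+ v l.

Lemma D1_cube_add_coord (A : zmodType) n (f : cube n -> A) : Dk_cube 1 f ->
  forall (x : cube n) (t : 'I_n), x t = false ->
  f [ffun r => (r == t) || x r] = f x + f (cube_of [set t]) - f (cube_of set0).
Proof.
move=> Hf x t xt.
pose psi (v : cube 2) : cube n := [ffun r => (v ord0 && (r == t)) || (v ord_max && x r)].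
have psi_morph : cube_morphism psi.
  exists (fun _ => 0),
         (fun r l => if l == ord0 then (((r == t) : nat) : int) else ((x r : nat) : int)).
  move=> v r; rewrite big_ord_recl big_ord1 eqxx /= add0r ffunE.
  have -> : lift ord0 ord0 = ord_max :> 'I_2 by apply: val_inj.
  case: eqP => [->|_]; rewrite ?xt;
    by case: (v ord0); case: (v ord_max); rewrite //= ?mulr0 ?mulr1 ?addr0 ?add0r.
have psiE a b : psi (cube2 a b) = [ffun r => (a && (r == t)) || (b && x r)].
  by apply/ffunP => r; rewrite !ffunE.
have := Hf psi psi_morph; rewrite alt_sumE signed_sum_cube2 /comp !psiE.
have -> : [ffun r => (true && (r == t)) || false && x r] = cube_of [set t].
  by apply/ffunP => r; rewrite !ffunE in_set1 orbF.
have -> : [ffun r => (false && (r == t)) || true && x r] = x.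
  by apply/ffunP => r; rewrite !ffunE.
have -> : [ffun r => (false && (r == t)) || false && x r] = cube_of set0.
  by apply/ffunP => r; rewrite !ffunE in_set0.
rewrite /= => H; apply/eqP; rewrite -subr_eq0 -H.
rewrite opprB opprD !addrA addrAC [_ + f (cube_of set0) - _]addrAC.
by rewrite [X in X == _]addrAC.
Qed.

Lemma D1_cube_affine (A : zmodType) n (f : cube n -> A) : Dk_cube 1 f ->
  forall u, f u =
    affine_cube (f (cube_of set0)) (fun r => f (cube_of [set r]) - f (cube_of set0)) u.
Proof.
move=> Hf u; rewrite /affine_cube.
have [N] := ubnP (\sum_(r < n) (u r : nat)); elim: N u => // N IH u.
case: (pickP (fun r => u r)) => [t ut|u0] Hu; last first.
  have -> : u = cube_of set0 by apply/ffunP => r; rewrite !ffunE in_set0 u0.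
  by rewrite big1 ?addr0 // => r _; rewrite ffunE in_set0.
pose x : cube n := [ffun r => (r != t) && u r].
have xt : x t = false by rewrite ffunE eqxx.
have ux : u = [ffun r => (r == t) || x r].
  by apply/ffunP => r; rewrite !ffunE; case: eqP => [->|].
have weight_x : (\sum_(r < n) (x r : nat) < N)%N.
  suff : (\sum_(r < n) (u r : nat) = (\sum_(r < n) (x r : nat)).+1)%N by lia.
  rewrite (bigD1 t) // [in RHS](bigD1 t) //= ut xt add1n; congr (_.+1).
  by apply: eq_bigr => r /negPf rt; rewrite ffunE rt.
rewrite {1}ux D1_cube_add_coord // (IH x weight_x).
rewrite (bigD1 t) //= [X in _ = _ + X](bigD1 t) //= ut xt.
rewrite (eq_bigr (fun r => (f (cube_of [set r]) - f (cube_of set0)) *+ u r)); last first.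
  by move=> r /negPf rt; rewrite ffunE rt.
by rewrite mulr0n mulr1n add0r [X in _ = _ + X]addrC !addrA.
Qed.

Lemma affine_cube_comp_morphism (A : zmodType) k n (b0 : A) (b : 'I_n -> A)
    (psi : cube k -> cube n) :
  cube_morphism psi ->
  exists (c0 : A) (c : 'I_k -> A), forall v, affine_cube b0 b (psi v) = affine_cube c0 c v.
Proof.
move=> [c [M HM]].
exists (b0 + \sum_(r < n) b r *~ c r), (fun l => \sum_(r < n) b r *~ M r l) => v.
rewrite /affine_cube -addrA; congr (_ + _).
rewrite (eq_bigr (fun r => b r *~ c r + \sum_(l < k) (b r *~ M r l) *+ v l)); last first.
  move=> r _; rewrite pmulrn HM mulrzDr mulrz_sumr; congr (_ + _).
  by apply: eq_bigr => l _; rewrite mulrzA pmulrn.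
by rewrite big_split /= exchange_big /=; congr (_ + _); apply: eq_bigr => l _; rewrite sumrMnl.
Qed.

Section TopFace.
Variables (m w : nat).

Definition top_face : {set 'I_(m + w)} := [set rshift m t | t : 'I_w].

Definition face_ext (v : cube m) : cube (m + w) :=
  [ffun r => if split r is inl l then v l else true].

Definition face_proj (x : cube (m + w)) : cube m := [ffun l => x (lshift w l)].

Lemma face_ext_lshift v l : face_ext v (lshift w l) = v l.
Proof. by rewrite ffunE (unsplitK (inl l)). Qed.

Lemma face_ext_rshift v t : face_ext v (rshift m t) = true.
Proof. by rewrite ffunE (unsplitK (inr t)). Qed.

Lemma face_ext_top v : [forall r in top_face, face_ext v r].
Proof. by apply/forall_inP => _ /imsetP [t _ ->]; rewrite face_ext_rshift. Qed.

Lemma face_extK : cancel face_ext face_proj.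
Proof. by move=> v; apply/ffunP => l; rewrite ffunE face_ext_lshift. Qed.

Lemma face_projK (x : cube (m + w)) : [forall r in top_face, x r] -> face_ext (face_proj x) = x.
Proof.
move=> /forall_inP x_top; apply/ffunP => r; rewrite ffunE -(splitK r).
case: (split r) => [l|t]; first by rewrite (unsplitK (inl l)) ffunE.
by rewrite (unsplitK (inr t)) x_top //; apply: imset_f.
Qed.

Lemma cube_sign_face_ext v : cube_sign (face_ext v) = cube_sign v * (-1) ^+ w.
Proof.
rewrite /cube_sign -exprD big_split_ord /=; congr (_ ^+ (_ + _)).
  by apply: eq_bigr => l _; rewrite face_ext_lshift.
by rewrite (eq_bigr (fun _ => 1%N)) ?sum_nat_const ?card_ord ?muln1 // => t _;
  rewrite face_ext_rshift.
Qed.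

Lemma signed_sum_top_face (A : zmodType) (F : cube (m + w) -> A) :
  (forall x : cube (m + w), ~~ [forall r in top_face, x r] -> F x = 0) ->
  signed_sum F = signed_sum (F \o face_ext) *~ (-1) ^+ w.
Proof.
move=> F_off; rewrite /signed_sum (bigID (fun x : cube (m + w) => [forall r in top_face, x r])) /=.
rewrite [X in _ + X]big1 ?addr0 => [|x /F_off ->]; last by rewrite mul0rz.
rewrite (reindex_onto face_ext face_proj) /=; last by move=> x /face_projK.
rewrite (eq_bigl predT) => [|v]; last by rewrite face_ext_top face_extK eqxx.
by rewrite mulrz_suml; apply: eq_bigr => v _; rewrite cube_sign_face_ext mulrzA.
Qed.

End TopFace.

Lemma Dk_morphism_signed_sum_affine (A B : zmodType) i m w (phi : A -> B) :
  Dk_morphism i (m + w) phi -> (w < i)%N ->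
  forall (b0 : A) (b : 'I_m.+1 -> A), signed_sum (phi \o affine_cube b0 b) = 0.
Proof.
move=> hphi lt_wi b0 b.
pose top := top_face m.+1 w.
pose S (l : 'I_m.+1) : {set 'I_(m.+1 + w)} := lshift w l |: top.
(* [g] agrees with [affine_cube b0 b] on the top face and equals [b0] elsewhere. *)
pose g (y : cube (m.+1 + w)) := b0 + \sum_(l < m.+1) b l *+ [forall r in S l, y r].
have g_Dk : Dk_cube i g.
  apply: Dk_cube_monomial_sum => l; rewrite cardsU1; apply: leq_trans lt_wi.
  rewrite -[w.+1]add1n leq_add ?leq_b1 //.
  by apply: leq_trans (leq_imset_card _ _) _; rewrite card_ord.
have phi_g : signed_sum (phi \o g) = 0 := hphi _ g g_Dk _ (cube_morphism_id _).
have g_off (y : cube (m.+1 + w)) : ~~ [forall r in top, y r] -> phi (g y) - phi b0 = 0.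
  move=> y_off; rewrite /g big1 ?addr0 ?subrr // => l _.
  suff -> : [forall r in S l, y r] = false by [].
  apply/negbTE; apply: contra y_off => /forall_inP y_S; apply/forall_inP => r r_top.
  by apply: y_S; rewrite in_setU1 r_top orbT.
have g_ext v : g (face_ext w v) = affine_cube b0 b v.
  congr (_ + _); apply: eq_bigr => l _; congr (_ *+ nat_of_bool _).
  apply/forall_inP/idP => [y_S|vl r /setU1P [->|r_top]].
    by rewrite -(face_ext_lshift w v l) y_S ?setU11.
  - by rewrite face_ext_lshift.
  - exact: (forall_inP (face_ext_top w v)).
have := signed_sum_top_face g_off.
rewrite signed_sumB phi_g signed_sum_const subrr.
rewrite (eq_signed_sum (G := fun v => phi (affine_cube b0 b v) - phi b0)) => [|v]; last first.
  by rewrite /= g_ext.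
rewrite signed_sumB signed_sum_const subr0 => H.
by rewrite -[LHS]mulr1z -(@sqrr_sign int w) expr2 mulrzA -H mul0rz.
Qed.

Unset Implicit Arguments.

Theorem mainTheorem3 (A B : zmodType) (i j : nat) (hi : (1 <= i)%N) (hj : (1 <= j)%N)
  (phi : A -> B) (hphi : Dk_morphism i j phi) :
  ((j < i)%N -> forall a a' : A, phi a = phi a') /\
  ((i <= j)%N -> Dk_morphism 1 (j - i + 1) phi).
Proof.
split=> [lt_ji | le_ij].
  suff phi_const a : phi a = phi 0 by move=> a a'; rewrite !phi_const.
  have := @Dk_morphism_signed_sum_affine _ _ i 0 j phi hphi lt_ji 0 (fun _ => a).
  rewrite signed_sum_cube1 /= /affine_cube !big_ord1 !ffunE mulr0n mulr1n !add0r.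
  by move/eqP; rewrite subr_eq0 => /eqP.
move=> n f f_D1 psi psi_morph.
have [c0 [c f_psi]] := affine_cube_comp_morphism
  (f (cube_of set0)) (fun r => f (cube_of [set r]) - f (cube_of set0)) psi_morph.
rewrite alt_sumE (eq_signed_sum (G := phi \o affine_cube c0 c)) => [|v].
  apply: (@Dk_morphism_signed_sum_affine _ _ i _ (i - 1)); last by lia.
  by have -> : (j - i + 1 + (i - 1) = j)%N by lia.
by rewrite /= D1_cube_affine // f_psi.
Qed.
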